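(* Let $X$ be a real topological vector space such that either (1) $X$ is separable and completely metrizable, or (2) $X=Y^*$ where $Y$ is a separable normed space and $X$ carries the weak* topology. If $C\subseteq X$ is nonempty and CS-closed, then $\operatorname{fri} C\neq\emptyset$.
   Context: A subset $C$ of a topological vector space is CS-closed (convergent-series closed) if whenever $x_i\in C$, $\lambda_i\ge0$ ($i\in\mathbb N$), $\sum_i\lambda_i=1$ and the series $\sum_i\lambda_i x_i$ converges in $X$, its sum belongs to $C$. For a convex set $C$, a convex subset $F\subseteq C$ is a face of $C$ if for every $x\in F$ and all $y,z\in C$ with $x\in(y,z)=\{(1-t)y+tz:t\in(0,1)\}$ we have $y,z\in F$; $F_{\min}(x,C)$ is the intersection of all faces of $C$ containing $x\in C$. The face relative interior is $\operatorname{fri} C=\{x\in C: C\subseteq\overline{F_{\min}(x,C)}\}$. *)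

From HB Require Import structures.
From mathcomp Require Import all_boot all_order all_algebra.
From mathcomp Require Import all_classical all_reals all_analysis.
Set Implicit Arguments. Unset Strict Implicit. Unset Printing Implicit Defensive.
Import Order.TTheory GRing.Theory Num.Theory.
Import numFieldNormedType.Exports.
Local Open Scope classical_set_scope.
Local Open Scope ring_scope.

Section Defs.
Variables (R : realType) (X : topologicalLmodType R).

Definition open_segment (y z : X) : set X :=
  [set (1 - t) *: y + t *: z | t in [set t : R | 0 < t < 1]].

Definition convex_set_of (C : set X) : Prop :=
  forall x y, C x -> C y -> forall t : R, 0 <= t <= 1 ->
    C ((1 - t) *: x + t *: y).

Definition CS_closed (C : set X) : Prop :=
  forall (x : nat -> X) (l : nat -> R),
    (forall i, C (x i)) -> (forall i, 0 <= l i) ->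
    series l @ \oo --> (1 : R) ->
    forall s : X, series (fun i => l i *: x i) @ \oo --> s -> C s.

Definition face (C F : set X) : Prop :=
  [/\ F `<=` C, convex_set_of F &
      forall x y z, F x -> C y -> C z -> open_segment y z x -> F y /\ F z].

Definition Fmin (x : X) (C : set X) : set X :=
  \bigcap_(F in [set F | face C F /\ F x]) F.

Definition fri (C : set X) : set X :=
  [set x | C x /\ C `<=` closure (Fmin x C)].

End Defs.

Definition separable (T : topologicalType) : Prop :=
  exists D : set T, countable D /\ dense D.

Definition completely_metrizable (R : realType) (T : topologicalType) : Prop :=
  exists d : T -> T -> R,
    (forall x y, 0 <= d x y) /\
    (forall x y, d x y = 0 <-> x = y) /\
    (forall x y, d x y = d y x) /\
    (forall x y z, d x z <= d x y + d y z) /\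
    (forall (x : T) (A : set T),
        nbhs x A <-> exists2 e : R, 0 < e & [set y | d x y < e] `<=` A) /\
    (forall u : nat -> T,
        (forall e : R, 0 < e -> exists N : nat, forall m n : nat,
             (N <= m)%N -> (N <= n)%N -> d (u m) (u n) < e) ->
        exists l : T, u @ \oo --> l).

(* X is (isomorphic, as a topological vector space, to) the dual Y^* of the
   normed space Y with its weak* topology: ev is a linear bijection from X
   onto the space of continuous linear functionals on Y, and the topology of
   X is the initial topology of the evaluations x |-> ev x y (y in Y). *)
Definition is_weak_star_dual (R : realType) (X : topologicalLmodType R)
    (Y : normedModType R) (ev : X -> Y -> R) : Prop :=
  (forall x, linear_for *%R (ev x) /\ continuous (ev x)) /\
  (forall (a : R) (x1 x2 : X) (y : Y),
      ev (a *: x1 + x2) y = a * ev x1 y + ev x2 y) /\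
  injective ev /\
  (forall f : Y -> R, linear_for *%R f -> continuous f ->
      exists x, ev x = f) /\
  (forall (x : X) (A : set X),
      nbhs x A <->
      exists (ys : seq Y) (e : R), 0 < e /\
        [set z | forall y, y \in ys -> `|ev z y - ev x y| < e] `<=` A).

From HB Require Import structures.
From mathcomp Require Import all_boot all_order all_algebra.
From mathcomp Require Import all_classical all_reals all_analysis.
From mathcomp Require Import ring lra.
Import Order.TTheory GRing.Theory Num.Theory.
Import numFieldNormedType.Exports.
Local Open Scope classical_set_scope.
Local Open Scope ring_scope.

(* Choose a sequence (c n) in C that is dense in C and weights mu n > 0 such
   that both sum_n mu n and sum_n mu n c n converge.  In a complete metric space
   the mu n are chosen one at a time, so small that the partial sums move by
   less than 2^-n; in a weak* dual one takes mu n = 2^-n / (1 + ||c n||), and the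
   partial sums converge pointwise on Y to a bounded functional.  After
   normalising to total mass 1, x = sum_n lam n c n lies in C because C is
   CS-closed.  Each c n lies in every face of C containing x: dropping the n-th
   term and renormalising gives y in C with x in the open segment (c n, y).
   Hence C is contained in the closure of range c, hence in the closure of
   F_min(x, C), that is, x is in fri C.
   Dense sequences come from countable networks: balls around a countable
   dense set in the metric case; in the dual case, the functionals of norm at
   most k whose values at finitely many points of a countable dense subset of Y
   are prescribed up to 1 / (m + 1). *)

Section TvsConvergence.
Context {R : realType} {X : topologicalLmodType R}.
Context {T : Type} {F : set_system T} {FF : Filter F}.

Lemma tvs_cvgD (f g : T -> X) (a b : X) :
  f @ F --> a -> g @ F --> b -> (fun t => f t + g t) @ F --> a + b.
Proof.
by move=> fa gb; apply: continuous2_cvg => //; exact: (@add_continuous X (a, b)).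
Qed.

Lemma tvs_cvgZ (s : T -> R) (f : T -> X) (k : R) (a : X) :
  s @ F --> k -> f @ F --> a -> (fun t => s t *: f t) @ F --> k *: a.
Proof.
move=> sk fa.
apply: (@continuous2_cvg _ R^o X X F FF s f *:%R) => //.
exact: (@scale_continuous R X (k, a)).
Qed.

End TvsConvergence.

Section DropTerm.
Context {R : realType} {V : topologicalLmodType R}.

Lemma series_drop_scale (v : nat -> V) (a : R) (n k : nat) :
  series (fun i => if i == n then 0 else a *: v i) k =
  a *: (series v k - (if (n < k)%N then v n else 0)).
Proof.
elim: k => [|k IH]; first by rewrite /series /= !big_geq // subrr scaler0.
rewrite !seriesSr IH /=; case: (ltngtP n k) => [nk|kn|->].
- by rewrite (ltn_trans nk (ltnSn k)) -scalerDr addrAC.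
- by rewrite ltnNge kn /= !subr0 scalerDr.
- by rewrite ltnSn subr0 addr0 addrK.
Qed.

Lemma cvg_series_drop_scale (v : nat -> V) (a : R) (n : nat) (s : V) :
  series v @ \oo --> s ->
  series (fun i => if i == n then 0 else a *: v i) @ \oo --> a *: (s - v n).
Proof.
move=> vs; have : (fun k => a *: (series v k - v n)) @ \oo --> a *: (s - v n).
  by apply: tvs_cvgZ; [exact: cvg_cst | apply: tvs_cvgD => //; exact: cvg_cst].
apply: cvg_trans; apply: near_eq_cvg; near=> k.
rewrite series_drop_scale ifT //; near: k; exists n.+1 => //.
Unshelve. all: by end_near. Qed.

End DropTerm.

Section Faces.
Context {R : realType} {X : topologicalLmodType R}.
Variables (C : set X) (c : nat -> X) (lam : nat -> R) (x : X).
Hypotheses (CS : CS_closed C) (Cc : forall i, C (c i)).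
Hypotheses (lam_ge0 : forall i, 0 <= lam i) (lam1 : series lam @ \oo --> (1 : R)).
Hypothesis (lamx : series (fun i => lam i *: c i) @ \oo --> x).

Lemma CS_closed_drop_term (n : nat) :
  lam n < 1 -> C ((1 - lam n)^-1 *: (x - lam n *: c n)).
Proof.
move=> lamn1; set a := (1 - lam n)^-1.
have a_ge0 : 0 <= a by rewrite invr_ge0 subr_ge0 ltW.
apply: (CS c (fun i => if i == n then 0 else a * lam i)) => //.
- by move=> i; case: ifP => // _; exact: mulr_ge0.
- have -> : (1 : R) = a * (1 - lam n) by rewrite mulVf // subr_eq0 eq_sym lt_eqF.
  exact: (@cvg_series_drop_scale R R^o).
- under eq_fun do rewrite (fun_if (fun r => r *: c _)) scale0r -scalerA.
  exact: cvg_series_drop_scale.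
Qed.

Lemma Fmin_series_term (n : nat) : 0 < lam n < 1 -> Fmin x C (c n).
Proof.
move=> /andP[lamn0 lamn1] F [[_ _ Fext] Fx].
have Cy := CS_closed_drop_term n lamn1.
suff seg : open_segment (c n) ((1 - lam n)^-1 *: (x - lam n *: c n)) x.
  by have [] := Fext x (c n) _ Fx (Cc n) Cy seg.
exists (1 - lam n); first by rewrite /= subr_gt0 lamn1 ltrBlDr ltrDl lamn0.
rewrite scalerA mulfV ?subr_eq0 1?eq_sym ?lt_eqF // scale1r.
by rewrite subKr addrC subrK.
Qed.

End Faces.

Section ConvergentWeights.
Context {R : realType} {X : topologicalLmodType R}.

Definition convergent_weights (c : nat -> X) (mu : nat -> R) : Prop :=
  [/\ forall n, 0 < mu n, exists M : R, series mu @ \oo --> M &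
      exists s : X, series (fun i => mu i *: c i) @ \oo --> s].

Lemma normalize_weights (c : nat -> X) (mu : nat -> R) :
  convergent_weights c mu ->
  exists (lam : nat -> R) (x : X), [/\ forall n, 0 < lam n < 1,
    series lam @ \oo --> (1 : R) & series (fun i => lam i *: c i) @ \oo --> x].
Proof.
move=> [mu_gt0 [M muM] [s mus]].
have le_seriesM n : series mu n <= M.
  rewrite -(cvg_lim _ muM) //; apply: nondecreasing_cvgn_le.
    by apply: nondecreasing_series => i _ _; exact: ltW.
  by apply/cvg_ex; exists M.
have series_ge0 n : 0 <= series mu n by apply: sumr_ge0 => i _; exact: ltW.
have lt_muM n : mu n < M.
  have := le_seriesM n.+2; rewrite !seriesSr.
  by have := series_ge0 n; have := mu_gt0 n.+1; lra.
have M_gt0 : 0 < M := lt_trans (mu_gt0 0%N) (lt_muM 0%N).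
exists (fun n => M^-1 * mu n), (M^-1 *: s); split.
- by move=> n; rewrite mulr_gt0 ?invr_gt0 //= mulrC ltr_pdivrMr // mul1r.
- rewrite -(mulVf (lt0r_neq0 M_gt0)).
  have -> : series (fun n => M^-1 * mu n) = M^-1 *: series mu.
    exact: (@seriesZ _ R^o).
  exact: cvgMl_tmp.
- rewrite (_ : series _ = fun n => M^-1 *: series (fun i => mu i *: c i) n).
    by apply: tvs_cvgZ => //; exact: cvg_cst.
  apply: funext => n; rewrite /series /= scaler_sumr.
  by under [RHS]eq_bigr do rewrite scalerA.
Qed.

Lemma convergent_weights_fri (C : set X) (c : nat -> X) (mu : nat -> R) :
  CS_closed C -> (forall n, C (c n)) -> C `<=` closure (range c) ->
  convergent_weights c mu -> fri C !=set0.
Proof.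
move=> CS Cc Cdense /normalize_weights[lam [x [lam01 lam1 lamx]]].
have lam_ge0 n : 0 <= lam n by have /andP[/ltW] := lam01 n.
exists x; split; first exact: CS c lam Cc lam_ge0 lam1 x lamx.
apply: subset_trans Cdense _; apply: closureS => _ [n _ <-].
exact: Fmin_series_term.
Qed.

End ConvergentWeights.

Lemma cvg_series_geometric_dominated {R : realType} (mu : nat -> R) :
  (forall n, 0 <= mu n <= 2^-1 ^+ n) -> exists M : R, series mu @ \oo --> M.
Proof.
move=> mu_bd; apply/cvg_ex; apply: (@series_le_cvg _ _ (geometric 1 2^-1)).
- by move=> n; case/andP: (mu_bd n).
- by move=> n; apply: geometric_ge0.
- by move=> n; rewrite /geometric /= mul1r; case/andP: (mu_bd n).
by apply: is_cvg_geometric_series; rewrite gtr0_norm // invf_lt1 // ltr1n.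
Qed.

Definition network {T : topologicalType} {I : Type} (U : I -> set T) : Prop :=
  forall z B, nbhs z B -> exists i, U i z /\ U i `<=` B.

Lemma network_dense_seq {T : topologicalType} {I : countType} {U : I -> set T}
    {C : set T} :
  network U -> C !=set0 ->
  exists c : nat -> T, (forall n, C (c n)) /\ C `<=` closure (range c).
Proof.
move=> netU [c0 Cc0].
pose pick i := if pselect (exists z, C z /\ U i z) is left h
  then projT1 (cid h) else c0.
have pickP i : C (pick i) /\ ((exists z, C z /\ U i z) -> U i (pick i)).
  rewrite /pick; case: pselect => [h|nh]; last by split=> // /nh.
  by case: cid => z [].
pose c n := if @unpickle I n is Some i then pick i else c0.
exists c; split=> [n|z Cz B /netU[i [Uiz UiB]]].
  by rewrite /c; case: unpickle => // i; case: (pickP i).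
exists (c (pickle i)); split; first by exists (pickle i).
by rewrite /c pickleK; apply/UiB/(pickP i).2; exists z.
Qed.

Lemma dense_nbhs {T : topologicalType} {D : set T} {z : T} {A : set T} :
  dense D -> nbhs z A -> exists2 y, D y & A y.
Proof.
move=> dD zA.
have [y [/nbhs_singleton Ay Dy]] := dD _ (ex_intro _ z zA) (open_interior A).
by exists y.
Qed.

Lemma separable_dense_seq {T : topologicalType} (x0 : T) :
  separable T -> exists e : nat -> T, dense (range e).
Proof.
move=> [D [/pfcard_geP[->|/surjfunPex[e De]] dD]].
  by have [y [_ []]] := dD setT (ex_intro _ x0 I) openT.
by exists e; rewrite -De.
Qed.

Section MetricSpace.
Context {R : realType} {T : topologicalType} {d : T -> T -> R}.
Hypotheses (dxx : forall x, d x x = 0) (dC : forall x y, d x y = d y x).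
Hypothesis dtri : forall x y z, d x z <= d x y + d y z.
Hypothesis dnbhs :
  forall x A, nbhs x A <-> exists2 e, 0 < e & [set y | d x y < e] `<=` A.

Lemma metric_network (e : nat -> T) : dense (range e) ->
  network (fun mk : nat * nat => [set y | d (e mk.1) y < mk.2.+1%:R^-1]).
Proof.
move=> de z B /dnbhs[eps eps0 epsB].
have eps2 : 0 < eps / 2 by rewrite divr_gt0.
have [k _ /(_ k (leqnn k)) /= k_lt] := near_infty_natSinv_lt (PosNum eps2).
have zk : nbhs z [set y | d z y < k.+1%:R^-1] by apply/dnbhs; exists k.+1%:R^-1.
have [_ [m _ <-] dzm] := dense_nbhs de zk.
exists (m, k); split=> [|y /= dmy]; first by rewrite /= dC.
apply: epsB; apply: le_lt_trans (dtri z (e m) y) _.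
by rewrite [eps]splitr; apply: ltrD; apply: lt_trans k_lt.
Qed.

Lemma geometric_steps_cauchy (u : nat -> T) :
  (forall n, d (u n) (u n.+1) <= 2^-1 ^+ n) ->
  forall eps, 0 < eps -> exists N, forall m n, (N <= m)%N -> (N <= n)%N ->
    d (u m) (u n) < eps.
Proof.
move=> u_step eps eps0; set h : R := 2^-1.
have h_gt0 : 0 < h by rewrite invr_gt0.
have hh p : 2 * (h * p) = p by rewrite mulrA divff ?mul1r.
have d_le m j : d (u m) (u (j + m)) <= 2 * h ^+ m - 2 * h ^+ (j + m).
  elim: j => [|j IH]; first by rewrite add0n dxx subrr.
  rewrite addSn exprS hh; apply: le_trans (dtri _ (u (j + m)) _) _.
  by have := u_step (j + m); lra.
have h_lt1 : `|h| < 1 by rewrite gtr0_norm // invf_lt1 // ltr1n.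
have [N _ hN] := cvgr_dist_lt _ _ (cvg_expr h_lt1) _ (divr_gt0 eps0 (ltr0Sn _ 1)).
have d_lt m n : (N <= m <= n)%N -> d (u m) (u n) < eps.
  move=> /andP[Nm mn]; rewrite -(subnK mn); apply: le_lt_trans (d_le m _) _.
  have := hN m Nm; rewrite /= sub0r normrN gtr0_norm ?exprn_gt0 //.
  by have := exprn_gt0 (n - m + m) h_gt0; lra.
exists N => m n Nm Nn; case: (leqP m n) => [mn|/ltnW nm].
  by apply: d_lt; rewrite Nm.
by rewrite dC; apply: d_lt; rewrite Nn.
Qed.

End MetricSpace.

Section CompleteMetricTvs.
Context {R : realType} {X : topologicalLmodType R} {d : X -> X -> R}.
Hypotheses (dxx : forall x, d x x = 0) (dC : forall x y, d x y = d y x).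
Hypothesis dtri : forall x y z, d x z <= d x y + d y z.
Hypothesis dnbhs :
  forall x A, nbhs x A <-> exists2 e, 0 < e & [set y | d x y < e] `<=` A.
Hypothesis dcomplete : forall u : nat -> X,
  (forall e : R, 0 < e -> exists N : nat, forall m n : nat,
     (N <= m)%N -> (N <= n)%N -> d (u m) (u n) < e) ->
  exists l : X, u @ \oo --> l.

Lemma metric_small_step (p v : X) (eps : R) : 0 < eps ->
  exists t : R, 0 < t <= eps /\ d p (p + t *: v) < eps.
Proof.
move=> eps0.
have p_tv : (fun t : R => p + t *: v) @ (0 : R) --> p.
  rewrite -[X in _ --> X]addr0 -[X in _ + X](scale0r v).
  apply: tvs_cvgD; first exact: cvg_cst.
  by apply: tvs_cvgZ; [exact: cvg_id | exact: cvg_cst].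
have /p_tv/nbhs_ballP[del del0 delB] : nbhs p [set y | d p y < eps].
  by apply/dnbhs; exists eps.
exists (Num.min (del / 2) eps); split.
  by rewrite lt_min ge_min lexx orbT andbT divr_gt0.
apply: delB; rewrite /ball /= sub0r normrN gtr0_norm; last first.
  by rewrite lt_min divr_gt0.
by rewrite gt_min ltr_pdivrMr // ltr_pMr // ltr1n.
Qed.

Lemma complete_metric_convergent_weights (c : nat -> X) :
  exists mu, convergent_weights c mu.
Proof.
set h : R := 2^-1.
have step p n : {t : R | 0 < t <= h ^+ n /\ d p (p + t *: c n) < h ^+ n}.
  by apply: cid; apply: metric_small_step; rewrite exprn_gt0 ?invr_gt0.
pose S := fix S n := if n is n'.+1 then S n' + sval (step (S n') n') *: c n' else 0.
pose mu n := sval (step (S n) n).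
have mu_bd n : 0 < mu n <= h ^+ n by rewrite /mu; case: (step (S n) n) => ? [].
have S_step n : d (S n) (S n.+1) < h ^+ n.
  by rewrite /= /mu; case: (step (S n) n) => ? [].
have SE : S = series (fun i => mu i *: c i).
  apply: funext; elim=> [|n IH]; first by rewrite /series /= big_geq.
  by rewrite seriesSr -IH.
exists mu; split.
- by move=> n; case/andP: (mu_bd n).
- by apply: cvg_series_geometric_dominated => n; case/andP: (mu_bd n) => /ltW ->.
- rewrite -SE; apply: dcomplete; apply: geometric_steps_cauchy => // n.
  exact/ltW/S_step.
Qed.

End CompleteMetricTvs.

Lemma norm_cvg_le {R : realType} (u : nat -> R) (l B : R) :
  u @ \oo --> l -> (forall n, `|u n| <= B) -> `|l| <= B.
Proof.
move=> ul ub; rewrite leNgt; apply/negP => lB.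
have lB0 : 0 < `|l| - B by rewrite subr_gt0.
have [N _ /(_ N (leqnn N))] := cvgr_dist_lt _ _ ul _ lB0.
by have := ub N; have := ler_distD (u N) l 0; rewrite !subr0; lra.
Qed.

Lemma floor_dist_lt1 {R : realType} (t : R) : `|t - (Num.floor t)%:~R| < 1.
Proof.
have := floor_le t; have := floorD1_gt t; rewrite intrD => t_lt le_t.
by rewrite ger0_norm ?subr_ge0 //; lra.
Qed.

Lemma dist_lt_of_same_floor {R : realType} (M a b : R) (q : int) : 0 < M ->
  `|M * a - q%:~R| < 1 -> `|M * b - q%:~R| < 1 -> `|a - b| < 2 / M.
Proof.
move=> M0 aq bq; rewrite ltr_pdivlMr // -[M in _ * M]gtr0_norm // -normrM mulrBl.
have -> : a * M - b * M = (M * a - q%:~R) - (M * b - q%:~R) by ring.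
by apply: le_lt_trans (ler_normB _ _) _; lra.
Qed.

Section NormedFunctionals.
Context {R : realType} {Y : normedModType R}.

Lemma linear_for_bounded {f : Y -> R} : linear_for *%R f -> continuous f ->
  exists2 K, 0 < K & forall y, `|f y| <= K * `|y|.
Proof.
move=> flin fcont.
pose F : {linear Y -> R^o} := HB.pack f (GRing.isLinear.Build R Y R^o *%R f flin).
have /linear_boundedP/pinfty_ex_gt0[K K0 FK] : bounded_near F (nbhs 0).
  exact/linear_bounded_continuous.
by exists K.
Qed.

Lemma linear_for_continuous {f : Y -> R} {K : R} : linear_for *%R f ->
  (forall y, `|f y| <= K * `|y|) -> continuous f.
Proof.
move=> flin fK.
pose F : {linear Y -> R^o} := HB.pack f (GRing.isLinear.Build R Y R^o *%R f flin).
apply: (@bounded_linear_continuous _ _ _ F); apply/linear_boundedP.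
by near=> r => y; apply: le_trans (fK y) _; apply: ler_wpM2r.
Unshelve. all: by end_near. Qed.

Lemma linear_for_dist_le {f g : Y -> R} {k : R} (y y' : Y) :
  linear_for *%R f -> linear_for *%R g ->
  (forall u, `|f u| <= k * `|u|) -> (forall u, `|g u| <= k * `|u|) ->
  `|f y - g y| <= `|f y' - g y'| + 2 * k * `|y - y'|.
Proof.
move=> flin glin fk gk.
have -> : f y - g y = (f y' - g y') + (f y - f y') - (g y - g y') by ring.
rewrite -!(zmod_morphism_linear flin) -!(zmod_morphism_linear glin).
apply: le_trans (ler_normB _ _) _; apply: le_trans (lerD (ler_normD _ _) (lexx _)) _.
by have := fk (y - y'); have := gk (y - y'); lra.
Qed.

Lemma series_functional {l : nat -> Y -> R} :
  (forall n, linear_for *%R (l n)) -> (forall n y, `|l n y| <= 2^-1 ^+ n * `|y|) ->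
  exists2 f : Y -> R, linear_for *%R f /\ continuous f &
    forall y, series (l^~ y) @ \oo --> f y.
Proof.
move=> l_lin l_bd; set h : R := 2^-1.
have h_gt0 : 0 < h by rewrite invr_gt0.
have h_lt1 : `|h| < 1 by rewrite gtr0_norm // invf_lt1 // ltr1n.
have l_geo n y : `|l n y| <= geometric `|y| h n by rewrite /geometric /= mulrC.
pose f y := limn (series (l^~ y)).
have f_cvg y : series (l^~ y) @ \oo --> f y.
  apply: normed_cvg; apply: (series_le_cvg _ _ (l_geo^~ y)).
  - by move=> n.
  - by move=> n; apply: geometric_ge0 => //; exact: ltW.
  - exact: is_cvg_geometric_series.
have f_bd y : `|f y| <= (1 - h)^-1 * `|y|.
  move: (f_cvg y) => /norm_cvg_le; apply=> n; rewrite mulrC.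
  apply: le_trans (ler_norm_sum _ _ _) _.
  by apply: le_trans (geometric_le_lim n _ h_gt0 h_lt1) => //; exact: ler_sum.
have f_lin : linear_for *%R f.
  move=> a y1 y2; apply: cvg_lim => //.
  have -> : series (l^~ (a *: y1 + y2)) =
      (fun n => a * series (l^~ y1) n + series (l^~ y2) n).
    apply: funext => n; rewrite /series /= big_distrr -big_split /=.
    by apply: eq_bigr => i _; rewrite (l_lin i).
  by apply: cvgD; [exact: cvgMl_tmp | exact: f_cvg].
by exists f => //; split=> //; exact: linear_for_continuous f_bd.
Qed.

End NormedFunctionals.

Section WeakStarDual.
Context {R : realType} {X : topologicalLmodType R} {Y : normedModType R}.
Context {ev : X -> Y -> R}.
Hypothesis hev : is_weak_star_dual ev.

Lemma ev_series (mu : nat -> R) (c : nat -> X) (y : Y) (n : nat) :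
  ev (series (fun i => mu i *: c i) n) y = series (fun i => mu i * ev (c i) y) n.
Proof.
have [_ [evadd _]] := hev.
pose evy : {linear X -> R^o} := HB.pack (ev^~ y)
  (GRing.isLinear.Build R X R^o *%R (ev^~ y) (fun a u v => evadd a u v y)).
rewrite /series /= -[ev _ y]/(evy _) linear_sum.
by apply: eq_bigr => i _; rewrite linearZ.
Qed.

Lemma weak_star_cvg (S : nat -> X) (x : X) :
  (forall y, (fun n => ev (S n) y) @ \oo --> ev x y) -> S @ \oo --> x.
Proof.
have [_ [_ [_ [_ evnbhs]]]] := hev.
move=> Sx A /evnbhs[ys [e [e0 ysA]]].
suff : \forall n \near \oo, forall y, y \in ys -> `|ev (S n) y - ev x y| < e.
  by apply: filterS => n Sn; apply: ysA.
elim: ys {ysA} => [|y ys IH]; first by apply: nearW => n y; rewrite in_nil.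
apply: filterS2 (cvgr_dist_lt _ _ (Sx y) _ e0) IH => n Sny Snys y'.
by rewrite in_cons => /orP[/eqP->|/Snys//]; rewrite distrC.
Qed.

Lemma weak_star_convergent_weights (c : nat -> X) :
  exists mu, convergent_weights c mu.
Proof.
have [evlin [_ [_ [evsurj _]]]] := hev; set h : R := 2^-1.
have h_gt0 : 0 < h by rewrite invr_gt0.
pose K n := sval (cid2 (linear_for_bounded (evlin (c n)).1 (evlin (c n)).2)).
have K_gt0 n : 0 < K n by rewrite /K; case: cid2.
have K_bd n y : `|ev (c n) y| <= K n * `|y| by rewrite /K; case: cid2.
pose mu n := h ^+ n / (1 + K n).
have mu_gt0 n : 0 < mu n by rewrite divr_gt0 ?exprn_gt0 ?addr_gt0.
have mu_K n : mu n * (1 + K n) = h ^+ n by rewrite divfK // gt_eqF ?addr_gt0.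
pose l n y := mu n * ev (c n) y.
have l_lin n : linear_for *%R (l n).
  by move=> a u v; rewrite /l (evlin (c n)).1 mulrDr mulrCA.
have l_bd n y : `|l n y| <= h ^+ n * `|y|.
  rewrite normrM gtr0_norm // -mu_K -mulrA; apply: ler_wpM2l; first exact: ltW.
  by apply: le_trans (K_bd n y) _; rewrite ler_wpM2r // lerDr.
have [f [f_lin f_cont] f_cvg] := series_functional l_lin l_bd.
have [x evx] := evsurj f f_lin f_cont.
exists mu; split=> //.
- apply: cvg_series_geometric_dominated => n; rewrite ltW //=.
  by rewrite ler_pdivrMr ?addr_gt0 // ler_pMr ?exprn_gt0 // lerDl ltW.
- exists x; apply: weak_star_cvg => y; rewrite evx.
  suff -> : (fun n => ev (series (fun i => mu i *: c i) n) y) = series (l^~ y) by [].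
  by apply: funext => n; rewrite ev_series.
Qed.

Lemma weak_star_network (e : nat -> Y) : dense (range e) ->
  network (fun i : nat * nat * seq (nat * int) =>
    [set z | (forall y, `|ev z y| <= i.1.1%:R * `|y|) /\
       forall p, p \in i.2 -> `|i.1.2.+1%:R * ev z (e p.1) - p.2%:~R| < 1]).
Proof.
have [evlin [_ [_ [_ evnbhs]]]] := hev.
move=> de g B /evnbhs[ys [eps [eps0 ysB]]].
have [Kg Kg0 Kg_bd] := linear_for_bounded (evlin g).1 (evlin g).2.
pose k := Num.bound Kg; have Kg_k : Kg < k%:R := archi_boundP (ltW Kg0).
have eps4 : 0 < eps / 4 by rewrite divr_gt0.
have [m _ /(_ m (leqnn m)) /= m_lt] := near_infty_natSinv_lt (PosNum eps4).
pose eta := eps / (4 * k.+1%:R).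
have eta0 : 0 < eta by rewrite divr_gt0 // mulr_gt0.
have k_eta : k%:R * eta < eps / 4.
  have -> : k%:R * eta = eps / 4 * (k%:R / k.+1%:R).
    by rewrite /eta; field; rewrite addrC natr1 pnatr_eq0.
  by rewrite gtr_pMr // ltr_pdivrMr // mul1r ltr_nat.
have near_e y : exists j, `|y - e j| < eta.
  have [_ [j _ <-]] := dense_nbhs de (nbhsx_ballx y eta eta0).
  by rewrite -ball_normE; exists j.
pose j y := sval (cid (near_e y)).
pose q y := Num.floor (m.+1%:R * ev g (e (j y))).
exists (k, m, [seq (j y, q y) | y <- ys]); split=> [|w [w_bd w_grid]].
  split=> [y|_ /mapP[y _ ->]]; last exact: floor_dist_lt1.
  by apply: le_trans (Kg_bd y) _; rewrite ler_wpM2r // ltW.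
apply: ysB => y ys_y; set dj := e (j y).
have y_dj : `|y - dj| < eta by rewrite /dj /j; case: cid.
have w_g_dj : `|ev w dj - ev g dj| < 2 / m.+1%:R.
  apply: (dist_lt_of_same_floor _ _ _ (q y)) => //.
    exact: (w_grid (j y, q y) (map_f _ ys_y)).
  exact: floor_dist_lt1.
have g_bd u : `|ev g u| <= k%:R * `|u|.
  by apply: le_trans (Kg_bd u) _; rewrite ler_wpM2r // ltW.
have M_eps : 2 / m.+1%:R < eps / 2 by move: m_lt; set a := m.+1%:R^-1; lra.
have k_dj : 2 * k%:R * `|y - dj| < eps / 2.
  rewrite -mulrA; apply: le_lt_trans (_ : 2 * (k%:R * eta) < _); last by lra.
  by rewrite ler_wpM2l // ler_wpM2l // ltW.
apply: le_lt_trans (linear_for_dist_le y dj (evlin w).1 (evlin g).1 w_bd g_bd) _.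
by rewrite [eps]splitr ltrD // (lt_trans w_g_dj).
Qed.
End WeakStarDual.

Theorem theorem3p2 (R : realType) (X : topologicalLmodType R) :
  ((separable X /\ completely_metrizable R X) \/
   (exists (Y : normedModType R) (ev : X -> Y -> R),
      separable Y /\ is_weak_star_dual ev)) ->
  forall C : set X, C !=set0 -> CS_closed C -> fri C !=set0.
Proof.
move=> hX C C0 CS.
suff [[c [Cc Cdense]] weights] :
    (exists c : nat -> X, (forall n, C (c n)) /\ C `<=` closure (range c)) /\
    forall c : nat -> X, exists mu, convergent_weights c mu.
  by have [mu cw] := weights c; exact: convergent_weights_fri CS Cc Cdense cw.
case: hX => [[sepX [d [_ [deq [dC [dtri [dnbhs dcomplete]]]]]]] | [Y [ev [sepY hev]]]].
  have dxx x : d x x = 0 by apply/deq.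
  have [e de] := separable_dense_seq 0 sepX.
  split; first exact: network_dense_seq (metric_network dC dtri dnbhs e de) C0.
  exact: complete_metric_convergent_weights dxx dC dtri dnbhs dcomplete.
have [e de] := separable_dense_seq 0 sepY.
split; first exact: network_dense_seq (weak_star_network hev e de) C0.
exact: weak_star_convergent_weights hev.
Qed.
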